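(* In the Nakagami model with parameters $L_c>0$, $L_s>0$, the expected distortion of uncoded transmission, $ED_u(\rho)=\mathrm E\!\left[\frac{1}{1+H+\Gamma}\right]$, satisfies $$\lim_{\rho\to\infty}-\frac{\log ED_u(\rho)}{\log\rho}=\min\{L_s+L_c,1\}.$$
   Context: Nakagami model: for SNR $\rho>0$, $H=\rho H_0$ and $\Gamma=\rho\Gamma_0$, where $H_0,\Gamma_0$ are independent, $H_0$ is Gamma distributed with shape $L_c$ and scale $1/L_c$, and $\Gamma_0$ is Gamma distributed with shape $L_s$ and scale $1/L_s$ (Gamma$(L,\theta)$ density $\frac{1}{\theta^L\Gamma(L)}x^{L-1}e^{-x/\theta}$, $x\ge0$). *)

From Stdlib Require Import Reals.
Open Scope R_scope.

Definition imp_int (f : R -> R) (l : R) : Prop :=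
  (forall a b, 0 < a -> a <= b -> inhabited (Riemann_integrable f a b)) /\
  (forall eps, 0 < eps -> exists d M, 0 < d /\ 0 < M /\
     forall a b (pr : Riemann_integrable f a b),
       0 < a -> a < d -> M < b -> Rabs (RiemannInt pr - l) < eps).

(* Unnormalized Gamma(L, 1/L) density on x > 0: x^(L-1) e^(-L x).
   The normalizing constant (Gamma(L) / L^L) is its integral over (0,oo). *)
Definition gamma_kernel (L x : R) : R := Rpower x (L - 1) * exp (- (L * x)).

(* v = E[1/(1+H+Gamma)] with H = rho*H0, Gamma = rho*Gamma0,
   H0 ~ Gamma(Lc,1/Lc), Gamma0 ~ Gamma(Ls,1/Ls) independent,
   computed as the iterated integral
   int_0^oo p_c(x) ( int_0^oo p_s(y) / (1 + rho x + rho y) dy ) dx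
   where p_L(x) = gamma_kernel L x / c_L, c_L = int_0^oo gamma_kernel L. *)
Definition ED_spec (Lc Ls rho v : R) : Prop :=
  exists (cc cs : R) (g : R -> R),
    imp_int (gamma_kernel Lc) cc /\
    imp_int (gamma_kernel Ls) cs /\
    (forall x, 0 < x ->
       imp_int (fun y => gamma_kernel Ls y / cs / (1 + rho * x + rho * y)) (g x)) /\
    imp_int (fun x => gamma_kernel Lc x / cc * g x) v.

From Stdlib Require Import Reals Lra Psatz Classical ClassicalEpsilon FunctionalExtensionality.
From Coquelicot Require Import Coquelicot.
Open Scope R_scope.

(* ED(rho) is the iterated improper integral
   int p_c(x) ( int p_s(y) / (1 + rho x + rho y) dy ) dx  of [ED_spec].
   1. A small theory of improper integrals over (0, oo) ([imp_int]):
      linearity, monotonicity, comparison with partial integrals, and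
      existence for nonnegative continuous integrands whose partial
      integrals are bounded (a monotone-convergence argument).
   2. The kernel x^(p-1) e^(-L x) is integrable for p, L > 0, and its mass on
      a window [t/2, t] is at least a constant times t^p.
   3. Existence: the inner integral is a rho-Lipschitz, hence continuous,
      function of x with values in [0,1], so the outer integral exists.
   4. Upper bound: 1/(1 + rho x + rho y) <= rho^(-th) x^(-th al) y^(-th (1-al))
      for th <= 1, and for th < Lc + Ls the shifted kernels stay integrable,
      so ED(rho) <= C rho^(-th).
   5. Lower bound: restricting x, y to [t/2, t] gives
      ED(rho) >= c t^(Lc+Ls) / (1 + 2 rho t); take t = 1/rho or t = 1.
   6. Squeezing -ln ED(rho) / ln rho between th and min(Lc + Ls, 1) and
      letting th increase to that minimum proves the limit. *)

Lemma imp_int_ex_RInt f l : imp_int f l -> forall a b, 0 < a -> a <= b -> ex_RInt f a b.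
Proof.
  intros [Hint _] a b ha hab. destruct (Hint a b ha hab) as [pr].
  now apply ex_RInt_Reals_1.
Qed.

(* The limit condition of [imp_int] with [RInt]; d <= M makes every
   admissible window [a, b] nondegenerate. *)
Lemma imp_int_RInt f l : imp_int f l -> forall eps, 0 < eps ->
  exists d M, 0 < d /\ d <= M /\
    forall a b, 0 < a -> a < d -> M < b -> Rabs (RInt f a b - l) < eps.
Proof.
  intros [Hint Hlim] eps he. destruct (Hlim eps he) as (d & M & hd & hM & H).
  exists (Rmin d M), M. pose proof (Rmin_l d M). pose proof (Rmin_r d M).
  split; [apply Rmin_glb_lt; lra|]. split; [lra|].
  intros a b ha had hb. destruct (Hint a b ha ltac:(lra)) as [pr].
  rewrite (RInt_Reals f a b pr). apply H; lra.
Qed.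

Lemma imp_int_intro f l :
  (forall a b, 0 < a -> a <= b -> ex_RInt f a b) ->
  (forall eps, 0 < eps -> exists d M, 0 < d /\ d <= M /\
    forall a b, 0 < a -> a < d -> M < b -> Rabs (RInt f a b - l) < eps) ->
  imp_int f l.
Proof.
  intros Hint Hlim. split.
  - intros a b ha hab. constructor. apply ex_RInt_Reals_0. now apply Hint.
  - intros eps he. destruct (Hlim eps he) as (d & M & hd & hM & H).
    exists d, M. do 2 (split; [lra|]).
    intros a b pr ha had hb. rewrite <- (RInt_Reals f a b pr). apply H; lra.
Qed.

Lemma imp_int_window f l : imp_int f l -> forall eps a0 b0, 0 < eps -> 0 < a0 ->
  exists a b, 0 < a /\ a <= a0 /\ b0 <= b /\ Rabs (RInt f a b - l) < eps.
Proof.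
  intros Hf eps a0 b0 he ha0.
  destruct (imp_int_RInt f l Hf eps he) as (d & M & hd & hM & H).
  pose proof (Rmin_l a0 d). pose proof (Rmin_r a0 d).
  pose proof (Rmin_glb_lt a0 d 0 ha0 hd).
  pose proof (Rmax_l b0 M). pose proof (Rmax_r b0 M).
  exists (Rmin a0 d / 2), (Rmax b0 M + 1).
  repeat split; try lra. apply H; lra.
Qed.

Lemma imp_int_ext f g l : (forall x, f x = g x) -> imp_int f l -> imp_int g l.
Proof. intros H Hf. replace g with f; auto. now apply functional_extensionality. Qed.

Lemma imp_int_plus f g l m : imp_int f l -> imp_int g m ->
  imp_int (fun x => f x + g x) (l + m).
Proof.
  intros Hf Hg. apply imp_int_intro.
  - intros a b ha hab. apply (ex_RInt_plus f g);
      [apply (imp_int_ex_RInt f l) | apply (imp_int_ex_RInt g m)]; auto.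
  - intros eps he.
    destruct (imp_int_RInt f l Hf (eps/2) ltac:(lra)) as (d1 & M1 & hd1 & hM1 & H1).
    destruct (imp_int_RInt g m Hg (eps/2) ltac:(lra)) as (d2 & M2 & hd2 & hM2 & H2).
    exists (Rmin d1 d2), (Rmax M1 M2).
    pose proof (Rmin_l d1 d2). pose proof (Rmin_r d1 d2).
    pose proof (Rmax_l M1 M2). pose proof (Rmax_r M1 M2).
    pose proof (Rmin_glb_lt d1 d2 0 hd1 hd2).
    do 2 (split; [lra|]). intros a b ha had hb.
    rewrite (RInt_plus f g) by (first [apply (imp_int_ex_RInt f l Hf)
                                      | apply (imp_int_ex_RInt g m Hg)]; lra).
    specialize (H1 a b ha ltac:(lra) ltac:(lra)). specialize (H2 a b ha ltac:(lra) ltac:(lra)).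
    apply Rabs_def2 in H1. apply Rabs_def2 in H2. unfold plus in *; simpl in *. apply Rabs_def1; lra.
Qed.

Lemma imp_int_scal f l c : imp_int f l -> imp_int (fun x => c * f x) (c * l).
Proof.
  intros Hf. apply imp_int_intro.
  - intros a b ha hab. apply (ex_RInt_scal f). now apply (imp_int_ex_RInt f l).
  - intros eps he. pose proof (Rabs_pos c) as hc.
    destruct (imp_int_RInt f l Hf (eps / (Rabs c + 1))) as (d & M & hd & hM & H).
    { apply Rdiv_lt_0_compat; lra. }
    exists d, M. do 2 (split; [lra|]). intros a b ha had hb.
    rewrite (RInt_scal f) by (apply (imp_int_ex_RInt f l Hf); lra).
    unfold scal; simpl; unfold mult; simpl.
    replace (c * RInt f a b - c * l) with (c * (RInt f a b - l)) by ring.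
    rewrite Rabs_mult. specialize (H a b ha had hb).
    apply Rmult_lt_compat_l with (r := Rabs c + 1) in H; [|lra].
    replace ((Rabs c + 1) * (eps / (Rabs c + 1))) with eps in H by (field; lra).
    pose proof (Rabs_pos (RInt f a b - l)). nra.
Qed.

Lemma imp_int_partial_le f l : imp_int f l -> (forall x, 0 < x -> 0 <= f x) ->
  forall a b, 0 < a -> a <= b -> RInt f a b <= l.
Proof.
  intros Hf Hpos a b ha hab. apply Rnot_lt_le. intro Hlt.
  destruct (imp_int_window f l Hf ((RInt f a b - l) / 2) a b ltac:(lra) ha)
    as (a' & b' & ha' & ha'a & hbb' & H).
  assert (Hsplit : RInt f a' b' = RInt f a' a + RInt f a b + RInt f b b').
  { rewrite <- (RInt_Chasles f a' a b'), <- (RInt_Chasles f a b b');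
      try (apply (imp_int_ex_RInt f l Hf); lra).
    unfold plus; simpl; ring. }
  assert (0 <= RInt f a' a).
  { apply RInt_ge_0; [lra | apply (imp_int_ex_RInt f l Hf); lra |].
    intros x hx; apply Hpos; lra. }
  assert (0 <= RInt f b b').
  { apply RInt_ge_0; [lra | apply (imp_int_ex_RInt f l Hf); lra |].
    intros x hx; apply Hpos; lra. }
  apply Rabs_def2 in H. lra.
Qed.

Lemma imp_int_nonneg f l : imp_int f l -> (forall x, 0 < x -> 0 <= f x) -> 0 <= l.
Proof.
  intros Hf Hpos. replace 0 with (RInt f 1 1) by now rewrite RInt_point.
  apply (imp_int_partial_le f l Hf Hpos); lra.
Qed.

Lemma imp_int_le f g l m : imp_int f l -> imp_int g m ->
  (forall x, 0 < x -> f x <= g x) -> l <= m.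
Proof.
  intros Hf Hg Hle.
  assert (Hdiff := imp_int_plus _ _ _ _ Hg (imp_int_scal f l (-1) Hf)).
  apply imp_int_nonneg in Hdiff; [lra|]. intros x hx. specialize (Hle x hx). lra.
Qed.

Lemma imp_int_bound f l B : imp_int f l ->
  (forall a b, 0 < a -> a <= b -> RInt f a b <= B) -> l <= B.
Proof.
  intros Hf HB. apply Rnot_lt_le. intro Hlt.
  destruct (imp_int_window f l Hf ((l - B) / 2) 1 1 ltac:(lra) ltac:(lra))
    as (a & b & ha & ha1 & hb1 & H).
  specialize (HB a b ha ltac:(lra)). apply Rabs_def2 in H. lra.
Qed.

Lemma ex_RInt_cont f a b : 0 < a -> a <= b ->
  (forall x, 0 < x -> continuity_pt f x) -> ex_RInt f a b.
Proof.
  intros ha hab Hc. apply (@ex_RInt_continuous R_CompleteNormedModule). intros z hz.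
  rewrite Rmin_left in hz by lra. apply continuity_pt_filterlim. apply Hc; lra.
Qed.

(* Monotone convergence for partial integrals: a nonnegative continuous
   function on (0,oo) with bounded partial integrals has an improper
   integral, namely the supremum of its partial integrals. *)
Lemma imp_int_of_bounded f B :
  (forall x, 0 < x -> continuity_pt f x) -> (forall x, 0 < x -> 0 <= f x) ->
  (forall a b, 0 < a -> a <= b -> RInt f a b <= B) -> exists l, imp_int f l.
Proof.
  intros Hc Hpos HB.
  set (E := fun r => exists a b, 0 < a /\ a <= b /\ r = RInt f a b).
  assert (Hbound : bound E) by (exists B; intros r (a & b & ha & hab & ->); auto).
  assert (Hne : exists r, E r) by (exists (RInt f 1 1), 1, 1; repeat split; lra).
  destruct (completeness E Hbound Hne) as [l [Hub Hlub]].
  exists l. apply imp_int_intro.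
  - intros a b ha hab. now apply ex_RInt_cont.
  - intros eps he.
    assert (Happrox : exists r, E r /\ l - eps < r).
    { apply NNPP. intro Hn. assert (l <= l - eps); [|lra].
      apply Hlub. intros r Hr. apply Rnot_lt_le. intro; apply Hn; eauto. }
    destruct Happrox as (r & (a0 & b0 & ha0 & hab0 & ->) & Hr).
    exists a0, b0. do 2 (split; [lra|]). intros a b ha had hb.
    assert (Hsplit : RInt f a b = RInt f a a0 + RInt f a0 b0 + RInt f b0 b).
    { rewrite <- (RInt_Chasles f a a0 b), <- (RInt_Chasles f a0 b0 b);
        try (apply ex_RInt_cont; auto; lra).
      unfold plus; simpl; ring. }
    assert (0 <= RInt f a a0).
    { apply RInt_ge_0; [lra | apply ex_RInt_cont; auto; lra |].
      intros x hx; apply Hpos; lra. }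
    assert (0 <= RInt f b0 b).
    { apply RInt_ge_0; [lra | apply ex_RInt_cont; auto; lra |].
      intros x hx; apply Hpos; lra. }
    assert (RInt f a b <= l) by (apply Hub; exists a, b; repeat split; lra).
    apply Rabs_def1; lra.
Qed.

Lemma imp_int_weighted p h P :
  (forall x, 0 < x -> continuity_pt p x) -> (forall x, 0 < x -> 0 <= p x) ->
  (forall x, 0 < x -> continuity_pt h x) -> (forall x, 0 < x -> 0 <= h x <= 1) ->
  imp_int p P -> exists v, imp_int (fun x => p x * h x) v /\ 0 <= v <= P.
Proof.
  intros Hpc Hpos Hhc Hh HP.
  assert (Hle : forall x, 0 < x -> 0 <= p x * h x <= p x).
  { intros x hx. specialize (Hpos x hx). specialize (Hh x hx). split; nra. }
  destruct (imp_int_of_bounded (fun x => p x * h x) P) as [v Hv].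
  - intros x hx. now apply continuity_pt_mult; auto.
  - intros x hx. apply Hle, hx.
  - intros a b ha hab. apply Rle_trans with (RInt p a b).
    + apply RInt_le; auto.
      * apply ex_RInt_cont; auto. intros x hx. apply continuity_pt_mult; auto.
      * now apply (imp_int_ex_RInt p P).
      * intros x hx. apply Hle. lra.
    + now apply (imp_int_partial_le p P).
  - exists v. split; [exact Hv|]. split.
    + apply (imp_int_nonneg _ _ Hv). intros x hx. apply Hle, hx.
    + apply (imp_int_le _ _ _ _ Hv HP). intros x hx. apply Hle, hx.
Qed.

Lemma exp_le_mono x y : x <= y -> exp x <= exp y.
Proof. intros [H|H]; [left; now apply exp_increasing | right; now subst]. Qed.

Lemma Rpower_pos x y : 0 < Rpower x y.
Proof. apply exp_pos. Qed.

Lemma cont_of_derive f x l : derivable_pt_lim f x l -> continuity_pt f x.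
Proof. intros H. apply derivable_continuous_pt. now exists l. Qed.

Lemma Rpower_cont y x : 0 < x -> continuity_pt (fun t => Rpower t y) x.
Proof. intros hx. eapply cont_of_derive. now apply derivable_pt_lim_power. Qed.

Lemma exp_lin_cont c x : continuity_pt (fun t => exp (- (c * t))) x.
Proof.
  apply cont_of_derive with (l := - c * exp (- (c * x))). apply is_derive_Reals.
  auto_derive; auto. ring.
Qed.

(* The Gamma kernel x^(p-1) e^(-L x) with independent shape p and rate L;
   [gamma_kernel L] is [kernel L L], and the exponent shifts p -> p - b
   appearing in the upper bound leave the rate unchanged. *)
Definition kernel (p L x : R) : R := Rpower x (p - 1) * exp (- (L * x)).

Lemma kernel_pos p L x : 0 < kernel p L x.
Proof. apply Rmult_lt_0_compat; apply exp_pos. Qed.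

Lemma kernel_cont p L x : 0 < x -> continuity_pt (kernel p L) x.
Proof.
  intros hx. apply (continuity_pt_mult (fun t => Rpower t (p - 1)) (fun t => exp (- (L * t)))).
  - now apply Rpower_cont.
  - apply exp_lin_cont.
Qed.

Lemma kernel_shift p b L x : Rpower x (- b) * kernel p L x = kernel (p - b) L x.
Proof.
  unfold kernel. rewrite <- Rmult_assoc, <- Rpower_plus. f_equal; f_equal; ring.
Qed.

Lemma RInt_Rpower p a b : 0 < p -> 0 < a -> a <= b ->
  RInt (fun x => Rpower x (p - 1)) a b = (Rpower b p - Rpower a p) / p.
Proof.
  intros hp ha hab. apply is_RInt_unique.
  replace ((Rpower b p - Rpower a p) / p) with
    (minus ((fun x => / p * Rpower x p) b) ((fun x => / p * Rpower x p) a))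
    by (unfold minus, plus, opp; simpl; field; lra).
  apply (@is_RInt_derive R_CompleteNormedModule (fun x => / p * Rpower x p)).
  - intros x hx. rewrite Rmin_left in hx by lra.
    replace (Rpower x (p - 1)) with (/ p * (p * Rpower x (p - 1))) by (field; lra).
    apply (is_derive_scal (fun t => Rpower t p)). apply is_derive_Reals.
    apply derivable_pt_lim_power. lra.
  - intros x hx. rewrite Rmin_left in hx by lra.
    apply continuity_pt_filterlim. apply Rpower_cont. lra.
Qed.

Lemma RInt_exp_lin c a b : 0 < c ->
  RInt (fun x => exp (- (c * x))) a b = (exp (- (c * a)) - exp (- (c * b))) / c.
Proof.
  intros hc. apply is_RInt_unique.
  replace ((exp (- (c * a)) - exp (- (c * b))) / c) with
    (minus ((fun x => - / c * exp (- (c * x))) b) ((fun x => - / c * exp (- (c * x))) a))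
    by (unfold minus, plus, opp; simpl; field; lra).
  apply (@is_RInt_derive R_CompleteNormedModule (fun x => - / c * exp (- (c * x)))).
  - intros x hx. auto_derive; auto. field. lra.
  - intros x hx. apply continuity_pt_filterlim. apply exp_lin_cont.
Qed.

Lemma kernel_le_Rpower p L x : 0 <= L -> 0 < x -> x <= 1 -> kernel p L x <= Rpower x (p - 1).
Proof.
  intros hL hx hx1. unfold kernel.
  assert (exp (- (L * x)) <= 1) by (rewrite <- exp_0; apply exp_le_mono; nra).
  pose proof (Rpower_pos x (p - 1)). nra.
Qed.

(* (ln x)^2 <= 4 x, i.e. ln x <= 2 sqrt x, from exp u >= 1 + u. *)
Lemma ln_sq_le x : 1 <= x -> ln x * ln x <= 4 * x.
Proof.
  intros hx. set (u := ln x).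
  assert (hu : 0 <= u) by (unfold u; rewrite <- ln_1; apply ln_le; lra).
  assert (Hx : x = exp (u / 2) * exp (u / 2)).
  { rewrite <- exp_plus. replace (u / 2 + u / 2) with u by field. unfold u.
    rewrite exp_ln; lra. }
  pose proof (exp_ineq1_le (u / 2)). rewrite Hx. nra.
Qed.

Lemma kernel_le_exp p L x : 0 < L -> 1 <= x ->
  kernel p L x <= exp (2 * (p - 1) ^ 2 / L) * exp (- (L / 2 * x)).
Proof.
  intros hL hx. unfold kernel, Rpower. rewrite <- !exp_plus. apply exp_le_mono.
  pose proof (ln_sq_le x hx). set (u := ln x) in *.
  assert (0 <= (L * u - 4 * (p - 1)) ^ 2 / (8 * L)).
  { apply Rdiv_le_0_compat; [apply pow2_ge_0 | lra]. }
  assert ((L * u - 4 * (p - 1)) ^ 2 / (8 * L) = L * u * u / 8 + 2 * (p - 1) ^ 2 / L - (p - 1) * u)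
    by (field; lra).
  nra.
Qed.

Lemma ex_RInt_kernel p L a b : 0 < a -> a <= b -> ex_RInt (kernel p L) a b.
Proof. intros ha hab. apply ex_RInt_cont; auto. intros; now apply kernel_cont. Qed.

(* On (0, 1] the partial integrals are bounded by 1/p, the mass of x^(p-1). *)
Lemma kernel_RInt_near0 p L a b : 0 < p -> 0 <= L -> 0 < a -> a <= b -> b <= 1 ->
  RInt (kernel p L) a b <= 1 / p.
Proof.
  intros hp hL ha hab hb.
  apply Rle_trans with (RInt (fun x => Rpower x (p - 1)) a b).
  - apply RInt_le; [exact hab | now apply ex_RInt_kernel | |].
    + apply ex_RInt_cont; [lra | lra |]. intros; now apply Rpower_cont.
    + intros x hx. apply kernel_le_Rpower; lra.
  - rewrite RInt_Rpower by auto.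
    assert (Rpower b p <= 1).
    { unfold Rpower. rewrite <- exp_0. apply exp_le_mono.
      assert (ln b <= 0) by (rewrite <- ln_1; apply ln_le; lra). nra. }
    pose proof (Rpower_pos a p).
    apply Rmult_le_compat_r; [left; apply Rinv_0_lt_compat|]; lra.
Qed.

(* On [1, oo) they are bounded by the mass of the exponential majorant. *)
Lemma kernel_RInt_tail p L a b : 0 < L -> 1 <= a -> a <= b ->
  RInt (kernel p L) a b <= exp (2 * (p - 1) ^ 2 / L) * (2 / L).
Proof.
  intros hL ha hab. set (K := exp (2 * (p - 1) ^ 2 / L)).
  assert (Hexp : ex_RInt (fun x => exp (- (L / 2 * x))) a b).
  { apply ex_RInt_cont; try lra. intros; apply exp_lin_cont. }
  apply Rle_trans with (RInt (fun x => K * exp (- (L / 2 * x))) a b).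
  - apply RInt_le; [exact hab | apply ex_RInt_kernel; lra | |].
    + apply (ex_RInt_scal (fun x => exp (- (L / 2 * x)))), Hexp.
    + intros x hx. apply kernel_le_exp; lra.
  - rewrite (RInt_scal (fun x => exp (- (L / 2 * x)))) by exact Hexp.
    unfold scal; simpl; unfold mult; simpl.
    rewrite RInt_exp_lin by lra.
    apply Rmult_le_compat_l; [left; apply exp_pos|].
    assert (exp (- (L / 2 * a)) <= 1) by (rewrite <- exp_0; apply exp_le_mono; nra).
    pose proof (exp_pos (- (L / 2 * b))).
    replace (2 / L) with (1 / (L / 2)) by (field; lra).
    apply Rmult_le_compat_r; [left; apply Rinv_0_lt_compat|]; lra.
Qed.

Lemma kernel_partial_bound p L : 0 < p -> 0 < L ->
  exists B, forall a b, 0 < a -> a <= b -> RInt (kernel p L) a b <= B.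
Proof.
  intros hp hL.
  exists (1 / p + exp (2 * (p - 1) ^ 2 / L) * (2 / L)).
  assert (0 < 1 / p) by (apply Rdiv_lt_0_compat; lra).
  assert (0 < exp (2 * (p - 1) ^ 2 / L) * (2 / L))
    by (apply Rmult_lt_0_compat; [apply exp_pos | apply Rdiv_lt_0_compat; lra]).
  intros a b ha hab.
  destruct (Rle_lt_dec b 1) as [hb|hb].
  { pose proof (kernel_RInt_near0 p L a b hp ltac:(lra) ha hab hb). lra. }
  destruct (Rle_lt_dec 1 a) as [ha1|ha1].
  { pose proof (kernel_RInt_tail p L a b hL ha1 hab). lra. }
  rewrite <- (RInt_Chasles (kernel p L) a 1 b) by (apply ex_RInt_kernel; lra).
  change (plus (RInt (kernel p L) a 1) (RInt (kernel p L) 1 b))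
    with (RInt (kernel p L) a 1 + RInt (kernel p L) 1 b).
  pose proof (kernel_RInt_near0 p L a 1 hp ltac:(lra) ha ltac:(lra) ltac:(lra)).
  pose proof (kernel_RInt_tail p L 1 b hL ltac:(lra) ltac:(lra)).
  lra.
Qed.

(* The mass of the kernel on the window [t/2, t] is of order t^p. *)
Definition window_const (p L : R) : R := Rpower (1 / 2) p * exp (- L) / 2.

Lemma window_const_pos p L : 0 < window_const p L.
Proof. unfold window_const. pose proof (Rpower_pos (1 / 2) p). pose proof (exp_pos (- L)). nra. Qed.

Lemma kernel_window_lower p L t : 0 < p -> 0 < L -> 0 < t -> t <= 1 ->
  window_const p L * Rpower t p <= RInt (kernel p L) (t / 2) t.
Proof.
  intros hp hL ht ht1.
  assert (Hpt : forall x, t / 2 <= x <= t -> Rpower (t / 2) p / t * exp (- L) <= kernel p L x).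
  { intros x hx. unfold kernel.
    replace (p - 1) with (p + - (1)) by ring.
    rewrite Rpower_plus, Rpower_Ropp, Rpower_1 by lra.
    assert (Rpower (t / 2) p <= Rpower x p) by (apply Rle_Rpower_l; lra).
    assert (/ t <= / x) by (apply Rinv_le_contravar; lra).
    assert (exp (- L) <= exp (- (L * x))) by (apply exp_le_mono; nra).
    pose proof (Rpower_pos (t / 2) p). pose proof (exp_pos (- L)).
    assert (0 < / t) by (apply Rinv_0_lt_compat; lra).
    assert (Rpower (t / 2) p * / t <= Rpower x p * / x) by (apply Rmult_le_compat; lra).
    apply Rmult_le_compat; try lra. apply Rmult_le_pos; lra. }
  replace (window_const p L * Rpower t p) with ((t - t / 2) * (Rpower (t / 2) p / t * exp (- L))).
  - rewrite <- (RInt_const (V := R_CompleteNormedModule)).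
    apply RInt_le; try lra.
    + apply ex_RInt_const.
    + apply ex_RInt_kernel; lra.
    + intros x hx. apply Hpt. lra.
  - replace (Rpower (t / 2) p) with (Rpower t p * Rpower (1 / 2) p)
      by (rewrite Rpower_mult_distr by lra; f_equal; field).
    unfold window_const. field. lra.
Qed.

Lemma kernel_integral_bounds p L : 0 < p -> 0 < L ->
  exists c0 B, 0 < c0 <= B /\ (exists l, imp_int (kernel p L) l) /\
    forall l, imp_int (kernel p L) l -> c0 <= l <= B.
Proof.
  intros hp hL. destruct (kernel_partial_bound p L hp hL) as [B HB].
  assert (Hpos : forall x, 0 < x -> 0 <= kernel p L x) by (intros; left; apply kernel_pos).
  destruct (imp_int_of_bounded (kernel p L) B) as [l0 Hl0]; auto.
  { intros; now apply kernel_cont. }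
  set (c0 := window_const p L * Rpower 1 p).
  assert (Hbounds : forall l, imp_int (kernel p L) l -> c0 <= l <= B).
  { intros l Hl. split.
    - eapply Rle_trans; [apply (kernel_window_lower p L 1); lra|].
      apply (imp_int_partial_le _ _ Hl Hpos); lra.
    - now apply (imp_int_bound _ _ _ Hl). }
  assert (hc0 : 0 < c0) by (apply Rmult_lt_0_compat; [apply window_const_pos | apply Rpower_pos]).
  exists c0, B. specialize (Hbounds l0 Hl0) as Hl0b.
  split; [lra|]. split; [now exists l0 | exact Hbounds].
Qed.

Lemma lipschitz_continuity g K : 0 <= K ->
  (forall x1 x2, 0 < x1 -> 0 < x2 -> g x1 <= g x2 + K * Rabs (x1 - x2)) ->
  forall x, 0 < x -> continuity_pt g x.
Proof.
  intros hK Hlip x hx eps he.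
  exists (Rmin (x / 2) (eps / (K + 1))). split.
  - apply Rmin_glb_lt; [lra | apply Rdiv_lt_0_compat; lra].
  - intros x' [_ hd]. simpl in *. unfold R_dist in *.
    pose proof (Rmin_l (x / 2) (eps / (K + 1))). pose proof (Rmin_r (x / 2) (eps / (K + 1))).
    assert (hx' : 0 < x') by (apply Rabs_def2 in hd; lra).
    pose proof (Hlip x' x hx' hx). pose proof (Hlip x x' hx hx').
    rewrite Rabs_minus_sym in H2.
    assert (K * Rabs (x' - x) < eps).
    { apply Rle_lt_trans with (K * (eps / (K + 1))); [apply Rmult_le_compat_l; lra|].
      replace (K * (eps / (K + 1))) with (eps - eps / (K + 1)) by (field; lra).
      pose proof (Rdiv_lt_0_compat eps (K + 1) he ltac:(lra)). lra. }
    apply Rabs_def1; lra.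
Qed.

Lemma param_integral (p : R -> R) (w : R -> R -> R) (K : R) :
  (forall y, 0 < y -> continuity_pt p y) -> (forall y, 0 < y -> 0 <= p y) ->
  imp_int p 1 -> 0 <= K ->
  (forall x y, 0 < x -> 0 < y -> 0 <= w x y <= 1) ->
  (forall x y, 0 < x -> 0 < y -> continuity_pt (w x) y) ->
  (forall x1 x2 y, 0 < x1 -> 0 < x2 -> 0 < y -> w x1 y <= w x2 y + K * Rabs (x1 - x2)) ->
  exists g : R -> R,
    (forall x, 0 < x -> imp_int (fun y => p y * w x y) (g x)) /\
    (forall x, 0 < x -> 0 <= g x <= 1) /\
    (forall x, 0 < x -> continuity_pt g x).
Proof.
  intros Hpc Hpos Hp hK Hw Hwc Hlip.
  assert (Hex : forall x, exists v, 0 < x -> imp_int (fun y => p y * w x y) v /\ 0 <= v <= 1).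
  { intros x. destruct (Rlt_dec 0 x) as [hx|hx]; [|exists 0; intros; lra].
    assert (Hwx : forall y, 0 < y -> 0 <= w x y <= 1) by (intros; now apply Hw).
    assert (Hwxc : forall y, 0 < y -> continuity_pt (w x) y) by (intros; now apply Hwc).
    destruct (imp_int_weighted p (w x) 1 Hpc Hpos Hwxc Hwx Hp) as (v & Hv).
    now exists v. }
  destruct (choice _ Hex) as [g Hg].
  exists g. do 2 (split; [intros x hx; apply (Hg x hx)|]).
  apply (lipschitz_continuity g K hK). intros x1 x2 h1 h2.
  replace (g x2 + K * Rabs (x1 - x2)) with (g x2 + K * Rabs (x1 - x2) * 1) by ring.
  apply (imp_int_le (fun y => p y * w x1 y)
                    (fun y => p y * w x2 y + K * Rabs (x1 - x2) * p y)).
  - apply (Hg x1 h1).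
  - apply imp_int_plus; [apply (Hg x2 h2) | now apply imp_int_scal].
  - intros y hy. specialize (Hlip x1 x2 y h1 h2 hy). specialize (Hpos y hy). nra.
Qed.

Definition density (L c y : R) : R := gamma_kernel L y / c.

Lemma density_nonneg L c y : 0 < c -> 0 <= density L c y.
Proof. intros hc. apply Rdiv_le_0_compat; [left; apply kernel_pos | exact hc]. Qed.

Lemma density_cont L c y : 0 < c -> 0 < y -> continuity_pt (density L c) y.
Proof.
  intros hc hy. apply (continuity_pt_div (gamma_kernel L) (fun _ => c)); [| | lra].
  - now apply (kernel_cont L L).
  - apply continuity_pt_const. now intros ? ?.
Qed.

Lemma density_mass L c : imp_int (gamma_kernel L) c -> 0 < c -> imp_int (density L c) 1.
Proof.
  intros H hc. replace 1 with (/ c * c) by (field; lra).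
  apply (imp_int_ext (fun y => / c * gamma_kernel L y)).
  - intros y. unfold density. field. lra.
  - now apply imp_int_scal.
Qed.

Definition attenuation (rho x y : R) : R := / (1 + rho * x + rho * y).

Lemma attenuation_bounds rho x y : 0 < rho -> 0 < x -> 0 < y ->
  0 <= attenuation rho x y <= 1.
Proof.
  intros hr hx hy. unfold attenuation. split.
  - left. apply Rinv_0_lt_compat. nra.
  - rewrite <- Rinv_1. apply Rinv_le_contravar; nra.
Qed.

Lemma attenuation_cont rho x y : 0 < rho -> 0 < x -> 0 < y ->
  continuity_pt (attenuation rho x) y.
Proof.
  intros hr hx hy. apply continuity_pt_inv; [|nra].
  apply cont_of_derive with (l := rho). apply is_derive_Reals. auto_derive; auto. ring.
Qed.

(* Lipschitz dependence on the first gain; this makes the inner integral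
   a continuous function of x. *)
Lemma attenuation_lipschitz rho x1 x2 y : 0 < rho -> 0 < x1 -> 0 < x2 -> 0 < y ->
  attenuation rho x1 y <= attenuation rho x2 y + rho * Rabs (x1 - x2).
Proof.
  intros hr h1 h2 hy. unfold attenuation.
  set (D1 := 1 + rho * x1 + rho * y). set (D2 := 1 + rho * x2 + rho * y).
  assert (hD1 : 1 <= D1) by (unfold D1; nra). assert (hD2 : 1 <= D2) by (unfold D2; nra).
  assert (Hdiff : / D1 - / D2 = rho * (x2 - x1) / (D1 * D2)) by (unfold D1, D2; field; nra).
  assert (Hnum : rho * (x2 - x1) <= rho * Rabs (x1 - x2)).
  { apply Rmult_le_compat_l; [lra|]. rewrite Rabs_minus_sym. apply Rle_abs. }
  assert (Hden : 0 < / (D1 * D2) <= 1).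
  { split; [apply Rinv_0_lt_compat; nra|]. rewrite <- Rinv_1. apply Rinv_le_contravar; nra. }
  assert (0 <= rho * Rabs (x1 - x2)) by (apply Rmult_le_pos; [lra | apply Rabs_pos]).
  assert (rho * (x2 - x1) * / (D1 * D2) <= rho * Rabs (x1 - x2) * / (D1 * D2))
    by (apply Rmult_le_compat_r; lra).
  unfold Rdiv in Hdiff. nra.
Qed.

Lemma ED_exists Lc Ls rho : 0 < Lc -> 0 < Ls -> 0 < rho -> exists v, ED_spec Lc Ls rho v.
Proof.
  intros hc hs hr.
  destruct (kernel_integral_bounds Lc Lc hc hc) as (c0c & Bc & hc0 & [cc Hcc] & Hbc).
  destruct (kernel_integral_bounds Ls Ls hs hs) as (c0s & Bs & hs0 & [cs Hcs] & Hbs).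
  assert (hcc : 0 < cc) by (specialize (Hbc cc Hcc); lra).
  assert (hcs : 0 < cs) by (specialize (Hbs cs Hcs); lra).
  destruct (param_integral (density Ls cs) (attenuation rho) rho)
    as (g & Hg & Hg01 & Hgc).
  - intros; now apply density_cont.
  - intros; now apply density_nonneg.
  - now apply density_mass.
  - lra.
  - intros; now apply attenuation_bounds.
  - intros; now apply attenuation_cont.
  - intros; now apply attenuation_lipschitz.
  - destruct (imp_int_weighted (density Lc cc) g 1) as (v & Hv & _).
    + intros; now apply density_cont.
    + intros; now apply density_nonneg.
    + exact Hgc.
    + exact Hg01.
    + now apply density_mass.
    + exists v, cc, cs, g. exact (conj Hcc (conj Hcs (conj Hg Hv))).
Qed.

(* 1/(1+z) <= z^(-th) for 0 <= th <= 1, interpolating between the bounds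
   1/(1+z) <= 1 and 1/(1+z) <= 1/z. *)
Lemma inv_one_plus_le_Rpower z th : 0 < z -> 0 <= th <= 1 -> / (1 + z) <= Rpower z (- th).
Proof.
  intros hz hth. rewrite Rpower_Ropp.
  apply Rinv_le_contravar; [apply Rpower_pos|].
  destruct (Rle_lt_dec z 1) as [hz1|hz1].
  - assert (ln z <= 0) by (rewrite <- ln_1; apply ln_le; lra).
    assert (Rpower z th <= 1) by (unfold Rpower; rewrite <- exp_0; apply exp_le_mono; nra).
    lra.
  - assert (Rpower z th <= Rpower z 1) by (apply Rle_Rpower; lra).
    rewrite Rpower_1 in * by lra. lra.
Qed.

(* The key pointwise estimate of the upper bound: the distortion decays like
   rho^(-th), at the price of integrable singular factors in x and y. *)
Lemma attenuation_le_Rpower rho x y th al : 0 < rho -> 0 < x -> 0 < y ->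
  0 <= th <= 1 -> 0 <= al <= 1 ->
  attenuation rho x y <= Rpower rho (- th) * Rpower x (- (th * al)) * Rpower y (- (th * (1 - al))).
Proof.
  intros hr hx hy hth hal.
  assert (Hlog : al * ln x + (1 - al) * ln y <= ln (x + y)).
  { assert (ln x <= ln (x + y)) by (apply ln_le; lra).
    assert (ln y <= ln (x + y)) by (apply ln_le; lra). nra. }
  unfold attenuation. replace (1 + rho * x + rho * y) with (1 + rho * (x + y)) by ring.
  eapply Rle_trans; [apply inv_one_plus_le_Rpower; [nra | exact hth]|].
  unfold Rpower. rewrite <- !exp_plus. apply exp_le_mono.
  rewrite ln_mult by lra. nra.
Qed.

Lemma proportional_split Lc Ls th : 0 < Lc -> 0 < Ls -> th < Lc + Ls ->
  let al := Lc / (Lc + Ls) in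
  0 <= al <= 1 /\ 0 < Lc - th * al /\ 0 < Ls - th * (1 - al).
Proof.
  intros hc hs ht al.
  assert (hal : al + Ls / (Lc + Ls) = 1) by (unfold al; field; lra).
  assert (0 <= Ls / (Lc + Ls)) by (apply Rdiv_le_0_compat; lra).
  split; [split; [apply Rdiv_le_0_compat|]; lra|]. split.
  - replace (Lc - th * al) with (Lc * (Lc + Ls - th) / (Lc + Ls)) by (unfold al; field; lra).
    apply Rdiv_lt_0_compat; nra.
  - replace (Ls - th * (1 - al)) with (Ls * (Lc + Ls - th) / (Lc + Ls))
      by (unfold al; field; lra).
    apply Rdiv_lt_0_compat; nra.
Qed.

Lemma inner_upper Ls cs Ks rho x th al gx : 0 < cs -> 0 < rho -> 0 < x ->
  0 <= th <= 1 -> 0 <= al <= 1 ->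
  imp_int (kernel (Ls - th * (1 - al)) Ls) Ks ->
  imp_int (fun y => density Ls cs y * attenuation rho x y) gx ->
  gx <= Rpower rho (- th) * Rpower x (- (th * al)) / cs * Ks.
Proof.
  intros hcs hr hx hth hal HKs Hg.
  set (A := Rpower rho (- th) * Rpower x (- (th * al)) / cs).
  apply (imp_int_le _ _ _ _ Hg (imp_int_scal _ _ A HKs)). intros y hy.
  apply Rle_trans with
    (density Ls cs y * (Rpower rho (- th) * Rpower x (- (th * al)) * Rpower y (- (th * (1 - al))))).
  - apply Rmult_le_compat_l; [apply density_nonneg; lra|].
    now apply attenuation_le_Rpower.
  - right. rewrite <- kernel_shift. unfold A, density.
    change (gamma_kernel Ls y) with (kernel Ls Ls y). field. lra.
Qed.

Lemma div_le_div_bounds K B c c0 : 0 <= K <= B -> 0 < c0 <= c -> K / c <= B / c0.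
Proof.
  intros hK hc. apply Rmult_le_compat; [lra | left; apply Rinv_0_lt_compat; lra | lra |].
  apply Rinv_le_contravar; lra.
Qed.

Lemma ED_upper Lc Ls th : 0 < Lc -> 0 < Ls -> 0 < th -> th <= 1 -> th < Lc + Ls ->
  exists C, 0 < C /\ forall rho v, 0 < rho -> ED_spec Lc Ls rho v -> v <= C * Rpower rho (- th).
Proof.
  intros hc hs ht1 ht2 ht3.
  destruct (proportional_split Lc Ls th hc hs ht3) as (hal & hbc & hbs).
  set (al := Lc / (Lc + Ls)) in *.
  destruct (kernel_integral_bounds Lc Lc hc hc) as (c0c & Bnc & hc0 & _ & Hcc).
  destruct (kernel_integral_bounds Ls Ls hs hs) as (c0s & Bns & hs0 & _ & Hcs).
  destruct (kernel_integral_bounds _ Lc hbc hc) as (c1c & Bc & hc1 & [Kc HKc] & HKcb).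
  destruct (kernel_integral_bounds _ Ls hbs hs) as (c1s & Bs & hs1 & [Ks HKs] & HKsb).
  specialize (HKcb Kc HKc). specialize (HKsb Ks HKs).
  exists (Bs / c0s * (Bc / c0c)). split; [apply Rmult_lt_0_compat; apply Rdiv_lt_0_compat; lra|].
  intros rho v hr (cc & cs & g & Hcc_int & Hcs_int & Hg & Hv).
  specialize (Hcc cc Hcc_int). specialize (Hcs cs Hcs_int).
  set (A := Rpower rho (- th)). assert (hA : 0 < A) by apply Rpower_pos.
  assert (Hgx : forall x, 0 < x -> g x <= A * Rpower x (- (th * al)) / cs * Ks).
  { intros x hx.
    exact (inner_upper Ls cs Ks rho x th al (g x) ltac:(lra) hr hx ltac:(lra) hal HKs (Hg x hx)). }
  assert (Hv_le : v <= A * Ks / cs / cc * Kc).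
  { apply (imp_int_le _ _ _ _ Hv (imp_int_scal _ _ (A * Ks / cs / cc) HKc)). intros x hx.
    apply Rle_trans with (density Lc cc x * (A * Rpower x (- (th * al)) / cs * Ks)).
    - apply Rmult_le_compat_l; [apply density_nonneg; lra | now apply Hgx].
    - right. rewrite <- kernel_shift. unfold density.
      change (gamma_kernel Lc x) with (kernel Lc Lc x). field. lra. }
  replace (A * Ks / cs / cc * Kc) with (Ks / cs * (Kc / cc) * A) in Hv_le by (field; lra).
  apply Rle_trans with (1 := Hv_le). apply Rmult_le_compat_r; [lra|].
  apply Rmult_le_compat; try (apply Rdiv_le_0_compat; lra); apply div_le_div_bounds; lra.
Qed.

Lemma imp_int_window_lower f l c p L t : imp_int f l -> (forall x, 0 < x -> 0 <= f x) ->
  0 < p -> 0 < L -> 0 < t -> t <= 1 -> 0 <= c ->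
  (forall x, t / 2 <= x <= t -> c * kernel p L x <= f x) ->
  c * (window_const p L * Rpower t p) <= l.
Proof.
  intros Hf Hpos hp hL ht ht1 hc Hdom.
  assert (Hk : ex_RInt (kernel p L) (t / 2) t).
  { apply ex_RInt_kernel; lra. }
  apply Rle_trans with (c * RInt (kernel p L) (t / 2) t).
  { apply Rmult_le_compat_l; [exact hc|]. now apply kernel_window_lower. }
  apply Rle_trans with (RInt f (t / 2) t); [|apply (imp_int_partial_le f l Hf Hpos); lra].
  replace (c * RInt (kernel p L) (t / 2) t) with (RInt (fun x => c * kernel p L x) (t / 2) t)
    by (rewrite (RInt_scal (kernel p L)) by exact Hk; reflexivity).
  apply RInt_le; [lra | apply (ex_RInt_scal (kernel p L)), Hk
                 | apply (imp_int_ex_RInt f l Hf); lra |].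
  intros x hx. apply Hdom. lra.
Qed.

(* For x in [t/2, t] the inner integral is at least of order t^Ls / (1 + 2 rho t):
   restrict y to the same window, where the attenuation is >= 1/(1 + 2 rho t). *)
Lemma inner_lower Ls cs Bs rho t x gx : 0 < Ls -> 0 < cs <= Bs -> 0 < rho ->
  0 < t -> t <= 1 -> t / 2 <= x <= t ->
  imp_int (fun y => density Ls cs y * attenuation rho x y) gx ->
  window_const Ls Ls * Rpower t Ls / (Bs * (1 + 2 * rho * t)) <= gx.
Proof.
  intros hs hcs hr ht ht1 hx Hg.
  assert (hD : 0 < Bs * (1 + 2 * rho * t)) by (apply Rmult_lt_0_compat; [lra | nra]).
  replace (window_const Ls Ls * Rpower t Ls / (Bs * (1 + 2 * rho * t)))
    with (/ (Bs * (1 + 2 * rho * t)) * (window_const Ls Ls * Rpower t Ls)) by (unfold Rdiv; ring).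
  apply (imp_int_window_lower _ _ _ Ls Ls t Hg); try lra.
  - intros y hy.
    apply Rmult_le_pos; [apply density_nonneg; lra | apply attenuation_bounds; lra].
  - left. now apply Rinv_0_lt_compat.
  - intros y hy. unfold density, attenuation. change (gamma_kernel Ls y) with (kernel Ls Ls y).
    pose proof (kernel_pos Ls Ls y).
    assert (/ (Bs * (1 + 2 * rho * t)) <= / cs * / (1 + rho * x + rho * y)).
    { assert (hDx : 0 < 1 + rho * x + rho * y) by nra.
      assert (1 + rho * x + rho * y <= 1 + 2 * rho * t) by nra.
      rewrite <- Rinv_mult. apply Rinv_le_contravar; [apply Rmult_lt_0_compat; lra|].
      apply Rmult_le_compat; lra. }
    unfold Rdiv. nra.
Qed.

(* Lower bound: restricting both gains to the window [t/2, t] shows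
   ED(rho) >= c t^(Lc + Ls) / (1 + 2 rho t) for all 0 < t <= 1. *)
Lemma ED_lower Lc Ls : 0 < Lc -> 0 < Ls ->
  exists c, 0 < c /\ forall rho t v, 0 < rho -> 0 < t -> t <= 1 -> ED_spec Lc Ls rho v ->
    c * Rpower t (Lc + Ls) / (1 + 2 * rho * t) <= v.
Proof.
  intros hc hs.
  destruct (kernel_integral_bounds Lc Lc hc hc) as (c0c & Bc & hc0 & _ & Hcc).
  destruct (kernel_integral_bounds Ls Ls hs hs) as (c0s & Bs & hs0 & _ & Hcs).
  pose proof (window_const_pos Lc Lc). pose proof (window_const_pos Ls Ls).
  exists (window_const Lc Lc / Bc * (window_const Ls Ls / Bs)).
  split; [apply Rmult_lt_0_compat; apply Rdiv_lt_0_compat; lra|].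
  intros rho t v hr ht ht1 (cc & cs & g & Hcc_int & Hcs_int & Hg & Hv).
  specialize (Hcc cc Hcc_int). specialize (Hcs cs Hcs_int).
  assert (hD : 0 < 1 + 2 * rho * t) by nra.
  set (G := window_const Ls Ls * Rpower t Ls / (Bs * (1 + 2 * rho * t))).
  assert (hG : 0 < G).
  { pose proof (Rpower_pos t Ls).
    apply Rdiv_lt_0_compat; apply Rmult_lt_0_compat; lra. }
  assert (Hgx : forall x, t / 2 <= x <= t -> G <= g x).
  { intros x hx. exact (inner_lower Ls cs Bs rho t x (g x) hs ltac:(lra) hr ht ht1 hx
                          (Hg x ltac:(lra))). }
  replace (window_const Lc Lc / Bc * (window_const Ls Ls / Bs) * Rpower t (Lc + Ls)
           / (1 + 2 * rho * t))
    with (G / Bc * (window_const Lc Lc * Rpower t Lc))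
    by (unfold G; rewrite Rpower_plus; field; repeat split; lra).
  apply (imp_int_window_lower _ _ _ Lc Lc t Hv); try lra.
  - intros x hx. apply Rmult_le_pos; [apply density_nonneg; lra|].
    apply (imp_int_nonneg _ _ (Hg x hx)). intros y hy.
    apply Rmult_le_pos; [apply density_nonneg; lra | apply attenuation_bounds; lra].
  - apply Rdiv_le_0_compat; lra.
  - intros x hx. specialize (Hgx x hx). pose proof (kernel_pos Lc Lc x).
    assert (G / Bc <= g x / cc) by (apply div_le_div_bounds; lra).
    change (gamma_kernel Lc x / cc * g x) with (kernel Lc Lc x / cc * g x).
    unfold Rdiv in *. nra.
Qed.

(* Choosing t = 1/rho when Lc + Ls <= 1 and t = 1 otherwise turns the window
   bound into ED(rho) >= c rho^(-min(Lc + Ls, 1)). *)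
Lemma ED_lower_Rpower Lc Ls : 0 < Lc -> 0 < Ls ->
  exists c, 0 < c /\ forall rho v, 1 <= rho -> ED_spec Lc Ls rho v ->
    c * Rpower rho (- Rmin (Ls + Lc) 1) <= v.
Proof.
  intros hc hs. destruct (ED_lower Lc Ls hc hs) as (c & hc0 & Hlow).
  exists (c / 3). split; [lra|]. intros rho v hr Hv.
  destruct (Rle_lt_dec (Ls + Lc) 1) as [hL|hL].
  - rewrite Rmin_left by lra.
    assert (hinv : 0 < / rho <= 1).
    { split; [apply Rinv_0_lt_compat; lra|]. rewrite <- Rinv_1. apply Rinv_le_contravar; lra. }
    specialize (Hlow rho (/ rho) v ltac:(lra) ltac:(lra) ltac:(lra) Hv).
    replace (1 + 2 * rho * / rho) with 3 in Hlow by (field; lra).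
    replace (Rpower (/ rho) (Lc + Ls)) with (Rpower rho (- (Ls + Lc))) in Hlow.
    + lra.
    + unfold Rpower. rewrite ln_Rinv by lra. f_equal. ring.
  - rewrite Rmin_right by lra.
    specialize (Hlow rho 1 v ltac:(lra) ltac:(lra) ltac:(lra) Hv).
    replace (Rpower 1 (Lc + Ls)) with 1 in Hlow
      by (unfold Rpower; rewrite ln_1, Rmult_0_r, exp_0; reflexivity).
    rewrite Rpower_Ropp, Rpower_1 by lra.
    apply Rle_trans with (2 := Hlow).
    replace (c / 3 * / rho) with (c * 1 / (3 * rho)) by (field; lra).
    apply Rmult_le_compat_l; [lra|]. apply Rinv_le_contravar; lra.
Qed.

Lemma exponent_squeeze (V : R -> R) m th c C R0 eps :
  0 < eps -> 0 < c -> 0 < C -> m - eps / 2 <= th -> th <= m ->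
  (forall rho, R0 < rho -> c * Rpower rho (- m) <= V rho <= C * Rpower rho (- th)) ->
  exists M, forall rho, M < rho -> Rabs (- ln (V rho) / ln rho - m) < eps.
Proof.
  intros he hc hC hth1 hth2 HV.
  set (K := Rabs (ln c) + Rabs (ln C)).
  exists (Rmax R0 (exp (2 * K / eps))). intros rho hr.
  pose proof (Rmax_l R0 (exp (2 * K / eps))). pose proof (Rmax_r R0 (exp (2 * K / eps))).
  assert (hrho : 0 < rho) by (pose proof (exp_pos (2 * K / eps)); lra).
  destruct (HV rho ltac:(lra)) as [Hlo Hhi].
  assert (hV : 0 < V rho) by (pose proof (Rpower_pos rho (- m)); nra).
  set (u := ln rho).
  assert (hu : 2 * K / eps < u).
  { unfold u. rewrite <- (ln_exp (2 * K / eps)). apply ln_increasing; [apply exp_pos | lra]. }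
  assert (hK : 2 * K < eps * u).
  { apply Rmult_lt_compat_l with (r := eps) in hu; [|lra].
    replace (eps * (2 * K / eps)) with (2 * K) in hu by (field; lra). lra. }
  pose proof (Rabs_pos (ln c)). pose proof (Rabs_pos (ln C)).
  assert (hu0 : 0 < u) by (unfold K in hK; nra).
  assert (Hln_lo : ln c - m * u <= ln (V rho)).
  { replace (ln c - m * u) with (ln (c * Rpower rho (- m))).
    - apply ln_le; [apply Rmult_lt_0_compat; [lra | apply Rpower_pos] | exact Hlo].
    - rewrite ln_mult, ln_Rpower by (auto; apply Rpower_pos). unfold u. ring. }
  assert (Hln_hi : ln (V rho) <= ln C - th * u).
  { replace (ln C - th * u) with (ln (C * Rpower rho (- th))).
    - apply ln_le; [exact hV | exact Hhi].
    - rewrite ln_mult, ln_Rpower by (auto; apply Rpower_pos). unfold u. ring. }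
  set (q := - ln (V rho) / u).
  assert (Hq : q * u = - ln (V rho)) by (unfold q; field; lra).
  pose proof (Rle_abs (ln C)). pose proof (Rle_abs (- ln c)). rewrite Rabs_Ropp in *.
  assert (Hup : q - m < eps / 2).
  { apply Rmult_lt_reg_r with u; [exact hu0|].
    rewrite Rmult_minus_distr_r, Hq. unfold K in hK. lra. }
  assert (Hdown : th - eps / 2 < q).
  { apply Rmult_lt_reg_r with u; [exact hu0|].
    rewrite Rmult_minus_distr_r, Hq. unfold K in hK. lra. }
  apply Rabs_def1; lra.
Qed.

Theorem lemma7 (Lc Ls : R) (hc : 0 < Lc) (hs : 0 < Ls) :
  (forall rho, 0 < rho -> exists v, ED_spec Lc Ls rho v) /\
  (forall ED : R -> R,
     (forall rho, 0 < rho -> ED_spec Lc Ls rho (ED rho)) ->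
     forall eps, 0 < eps -> exists M, forall rho, M < rho ->
       Rabs (- ln (ED rho) / ln rho - Rmin (Ls + Lc) 1) < eps).
Proof.
  split; [intros rho hr; now apply ED_exists|].
  intros ED HED eps he.
  set (m := Rmin (Ls + Lc) 1).
  assert (hm : 0 < m <= 1 /\ m <= Ls + Lc).
  { pose proof (Rmin_l (Ls + Lc) 1). pose proof (Rmin_r (Ls + Lc) 1).
    pose proof (Rmin_glb_lt (Ls + Lc) 1 0 ltac:(lra) ltac:(lra)). unfold m. lra. }
  set (th := m - Rmin (eps / 2) (m / 2)).
  assert (hth : m - eps / 2 <= th < m /\ 0 < th).
  { pose proof (Rmin_l (eps / 2) (m / 2)). pose proof (Rmin_r (eps / 2) (m / 2)).
    pose proof (Rmin_glb_lt (eps / 2) (m / 2) 0 ltac:(lra) ltac:(lra)). unfold th. lra. }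
  destruct (ED_upper Lc Ls th hc hs ltac:(lra) ltac:(lra) ltac:(lra)) as (C & hC & Hup).
  destruct (ED_lower_Rpower Lc Ls hc hs) as (c & hc0 & Hlow).
  apply (exponent_squeeze ED m th c C 1 eps); try lra.
  intros rho hr. split.
  - apply Hlow; [lra | apply HED; lra].
  - apply Hup; [lra | apply HED; lra].
Qed.
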